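(* Let $A=(A(i,j))_{i,j\in\mathbb{N}}$ be an infinite matrix with entries in $\{0,1\}$ having no identically zero rows, let $(X,\mu)$ be a measure space, and let $\{R_j\}_{j=1}^\infty$ and $\{D_j\}_{j=1}^\infty$ be families of measurable subsets of $X$ such that (a) $\mu(R_i\cap R_j)=0$ for all $i\neq j$; (b) $X\stackrel{\mu\text{-a.e.}}{=}\bigcup_{j=1}^\infty R_j$; (c) $D_i\stackrel{\mu\text{-a.e.}}{=}\bigcup_{j\in\mathbb{N}:A(i,j)=1}R_j$ for every $i$. Then: (1) for all $i,j$, $\mu(R_j\cap D_i)=0$ if $A(i,j)=0$ and $\mu(R_j\setminus D_i)=0$ if $A(i,j)=1$; and (2) for each pair $U,V$ of finite subsets of $\mathbb{N}$ such that $A(U,V,j)=1$ for only finitely many $j$, $$\bigcap_{u\in U}D_u\cap\bigcap_{v\in V}(X\setminus D_v)\stackrel{\mu\text{-a.e.}}{=}\bigcup_{j\in\mathbb{N}:A(U,V,j)=1}R_j.$$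
   Context: For measurable $Y,Z\subseteq X$, $Y\stackrel{\mu\text{-a.e.}}{=}Z$ means $\mu(Y\setminus Z)=0=\mu(Z\setminus Y)$. For finite $U,V\subseteq\mathbb{N}$ and $j\in\mathbb{N}$, $A(U,V,j)=\prod_{u\in U}A(u,j)\prod_{v\in V}(1-A(v,j))$. *)

From HB Require Import structures.
From mathcomp Require Import all_boot all_order all_algebra.
From mathcomp Require Import all_classical all_reals all_analysis.
Set Implicit Arguments. Unset Strict Implicit. Unset Printing Implicit Defensive.
Import Order.TTheory GRing.Theory Num.Theory.
Local Open Scope ring_scope.
Local Open Scope classical_set_scope.
Local Open Scope ereal_scope.

Definition ae_eq_set (d : measure_display) (T : measurableType d) (R : realType)
  (mu : {measure set T -> \bar R}) (Y Z : set T) : Prop :=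
  mu (Y `\` Z) = 0%E /\ mu (Z `\` Y) = 0%E.

(* A(U,V,j) = prod_{u in U} A(u,j) * prod_{v in V} (1 - A(v,j)) for a 0/1
   matrix A; it equals 1 exactly when this proposition holds (and 0 otherwise). *)
Definition AUV (A : nat -> nat -> bool) (U V : set nat) (j : nat) : Prop :=
  (forall u, U u -> A u j) /\ (forall v, V v -> ~~ A v j).

From HB Require Import structures.
From mathcomp Require Import all_boot all_order all_algebra.
From mathcomp Require Import all_classical all_reals all_analysis.
Import Order.TTheory GRing.Theory Num.Theory.
Local Open Scope ring_scope.
Local Open Scope classical_set_scope.
Local Open Scope ereal_scope.

(* Up to a null set the R_j partition X, so a set S is a.e. the union of
   the R_j it contains as soon as each R_j lies a.e. inside S or a.e. outside
   it.  By (a) and (c), R_j lies a.e. inside D_i when A(i,j) = 1 and a.e.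
   outside it when A(i,j) = 0; hence R_j lies a.e. inside the cell
   (cap_{u in U} D_u) \ (cup_{v in V} D_v) when A(U,V,j) = 1 and a.e. outside
   it otherwise. *)

Section negligible_cover.
Context {d : measure_display} {X : measurableType d} {R : realType}
  {mu : {measure set X -> \bar R}}.

Lemma negligible_bigcup_in (P : set nat) (F : nat -> set X) :
  (forall k, P k -> mu.-negligible (F k)) ->
  mu.-negligible (\bigcup_(k in P) F k).
Proof.
move=> PF; rewrite bigcup_mkcond; apply: negligible_bigcup => k.
by case: ifPn => [/set_mem/PF //|_]; exact: negligible_set0.
Qed.

Lemma ae_eq_setP {Y Z : set X} : measurable Y -> measurable Z ->
  ae_eq_set mu Y Z <-> mu.-negligible (Y `\` Z) /\ mu.-negligible (Z `\` Y).
Proof.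
move=> mY mZ; rewrite /ae_eq_set.
by rewrite !negligibleP //; exact: measurableD.
Qed.

Lemma ae_eq_bigcup_cover (Rs : nat -> set X) (S : set X) (P : set nat) :
  mu.-negligible (~` \bigcup_j Rs j) ->
  (forall j, P j -> mu.-negligible (Rs j `\` S)) ->
  (forall j, ~ P j -> mu.-negligible (Rs j `&` S)) ->
  mu.-negligible (S `\` \bigcup_(j in P) Rs j) /\
  mu.-negligible (\bigcup_(j in P) Rs j `\` S).
Proof.
move=> cover inS offS; split; last first.
  rewrite setD_bigcupl; exact: negligible_bigcup_in.
apply: (negligibleS _ (negligibleU cover (negligible_bigcup_in (~` P) _ offS))).
move=> x [Sx notPx]; have [[j _ Rjx]|] := pselect ((\bigcup_j Rs j) x).
  by right; exists j => // Pj; apply: notPx; exists j.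
by left.
Qed.

End negligible_cover.

Section partition_coding.
Context {d : measure_display} {X : measurableType d} {R : realType}
  {mu : {measure set X -> \bar R}}.
Variables (A : nat -> nat -> bool) (Rs Ds : nat -> set X).
Hypothesis Rs_disj : forall i j, i <> j -> mu.-negligible (Rs i `&` Rs j).
Hypothesis Rs_cover : mu.-negligible (~` \bigcup_j Rs j).
Hypothesis Ds_sub : forall i,
  mu.-negligible (Ds i `\` \bigcup_(j in [set j | A i j]) Rs j).
Hypothesis Ds_sup : forall i,
  mu.-negligible (\bigcup_(j in [set j | A i j]) Rs j `\` Ds i).

Lemma Rs_outside_Ds i j : ~~ A i j -> mu.-negligible (Rs j `&` Ds i).
Proof.
move=> Aij.
have disj k : A i k -> mu.-negligible (Rs j `&` Rs k).
  by move=> Aik; apply: Rs_disj => ejk; move: Aik; rewrite -ejk (negbTE Aij).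
apply: (negligibleS _ (negligibleU (Ds_sub i) (negligible_bigcup_in _ _ disj))).
move=> x [Rjx Dix].
have [[k Aik Rkx]|] := pselect ((\bigcup_(k in [set k | A i k]) Rs k) x).
  by right; exists k.
by left.
Qed.

Lemma Rs_inside_Ds i j : A i j -> mu.-negligible (Rs j `\` Ds i).
Proof.
move=> Aij; apply: (negligibleS _ (Ds_sup i)).
by move=> x [Rjx ?]; split=> //; exists j.
Qed.

Lemma cell_ae_eq_bigcup (U V : set nat) :
  let S := \bigcap_(u in U) Ds u `&` \bigcap_(v in V) ~` Ds v in
  let W := \bigcup_(j in [set j | AUV A U V j]) Rs j in
  mu.-negligible (S `\` W) /\ mu.-negligible (W `\` S).
Proof.
apply: ae_eq_bigcup_cover => // j.
  move=> [AU AV]; rewrite setDE setCI !setC_bigcap setIUr !setI_bigcupr.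
  apply: negligibleU; apply: negligible_bigcup_in.
    by move=> u Uu; exact: Rs_inside_Ds _ _ (AU _ Uu).
  by move=> v Vv; rewrite setCK; exact: Rs_outside_Ds _ _ (AV _ Vv).
move=> /not_andP[/existsNP[u /not_implyP[Uu /negP Auj]]|
                /existsNP[v /not_implyP[Vv /negP/negbNE Avj]]].
  apply: (negligibleS _ (Rs_outside_Ds _ _ Auj)).
  by move=> x [Rjx [Dx _]]; split=> //; exact: Dx.
apply: (negligibleS _ (Rs_inside_Ds _ _ Avj)).
by move=> x [Rjx [_ Dx]]; split=> //; exact: Dx.
Qed.

End partition_coding.

Theorem mainTheorem3 (d : measure_display) (X : measurableType d) (R : realType)
  (mu : {measure set X -> \bar R})
  (A : nat -> nat -> bool) (Rs Ds : nat -> set X)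
  (hA : forall i, exists j, A i j)
  (hRm : forall j, measurable (Rs j)) (hDm : forall j, measurable (Ds j))
  (ha : forall i j, i <> j -> mu (Rs i `&` Rs j) = 0%E)
  (hb : ae_eq_set mu setT (\bigcup_j Rs j))
  (hc : forall i, ae_eq_set mu (Ds i) (\bigcup_(j in [set j | A i j]) Rs j)) :
  (forall i j, (A i j = false -> mu (Rs j `&` Ds i) = 0%E) /\
               (A i j = true -> mu (Rs j `\` Ds i) = 0%E)) /\
  (forall U V : set nat, finite_set U -> finite_set V ->
     finite_set [set j | AUV A U V j] ->
     ae_eq_set mu (\bigcap_(u in U) Ds u `&` \bigcap_(v in V) ~` Ds v)
              (\bigcup_(j in [set j | AUV A U V j]) Rs j)).
Proof.
have mRs (P : set nat) : measurable (\bigcup_(j in P) Rs j).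
  exact: bigcup_measurable.
have [cover _] := (ae_eq_setP measurableT (mRs setT)).1 hb.
rewrite setTD in cover.
have disj i j : i <> j -> mu.-negligible (Rs i `&` Rs j).
  by move=> ij; apply/negligibleP; [exact: measurableI | exact: ha].
have Ds_sub i := ((ae_eq_setP (hDm i) (mRs _)).1 (hc i)).1.
have Ds_sup i := ((ae_eq_setP (hDm i) (mRs _)).1 (hc i)).2.
split=> [i j|U V _ _ _].
  split=> Aij; apply/negligibleP.
  - exact: measurableI.
  - by apply: Rs_outside_Ds disj Ds_sub _ _ _; rewrite Aij.
  - exact: measurableD.
  - by apply: Rs_inside_Ds Ds_sup _ _ _; rewrite Aij.
apply/ae_eq_setP; last exact: cell_ae_eq_bigcup.
- apply: measurableI; apply: bigcap_measurableType => k _ //.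
  exact: measurableC.
- exact: mRs.
Qed.
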